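(* Let $A\in\mathbb{R}^{n\times n}$, $B\in\mathbb{R}^{n\times m}$, $C\in\mathbb{R}^{p\times n}$ with $(A,C)$ observable and $(A,B)$ reachable, let $\ell$ be the observability index of $(A,C)$, and let $\mathbf{A}_\ell,\mathbf{B}_\ell$ be as in the context. Then the pair $(\mathbf{A}_\ell,\mathbf{B}_\ell)$ is reachable if and only if $p\ell=n$.
   Context: The observability index $\ell$ of an observable pair $(A,C)$ is the smallest $l$ with $\operatorname{rank}[C;CA;\dots;CA^{l-1}]=n$. Define $\mathcal{O}_\ell=[C;CA;\dots;CA^{\ell-1}]$; $\mathcal{T}_\ell\in\mathbb{R}^{p\ell\times m\ell}$ block lower triangular with $(i,j)$ block equal to $CA^{i-j-1}B$ if $i>j$ and $0$ otherwise; $\mathcal{R}_\ell=[A^{\ell-1}B\ \cdots\ AB\ B]$; $\mathcal{O}_\ell^{L}$ a fixed left inverse of $\mathcal{O}_\ell$. $\mathbf{F}_\ell=\mathrm{blockdiag}(S_p,S_m)$ where $S_q\in\mathbb{R}^{q\ell\times q\ell}$ has blocks $I_q$ at block positions $(i,i+1)$, $i=1,\dots,\ell-1$, zeros elsewhere; $\mathbf{L}_\ell\in\mathbb{R}^{(p\ell+m\ell)\times p}$ has $I_p$ in rows $p\ell-p+1,\dots,p\ell$, zeros elsewhere; $\mathbf{B}_\ell\in\mathbb{R}^{(p\ell+m\ell)\times m}$ has $I_m$ in its last $m$ rows, zeros elsewhere. $Z_\ell=[CA^\ell\mathcal{O}_\ell^L\ \ C\mathcal{R}_\ell-CA^\ell\mathcal{O}_\ell^L\mathcal{T}_\ell]$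 and $\mathbf{A}_\ell=\mathbf{F}_\ell+\mathbf{L}_\ell Z_\ell$. *)

From mathcomp Require Import all_boot all_order all_algebra.
Set Implicit Arguments. Unset Strict Implicit. Unset Printing Implicit Defensive.
Import GRing.Theory Num.Theory.
Local Open Scope ring_scope.

(* Block indexing: an index i : 'I_(q * l) of a vector made of l blocks of
   size q is split into its block number (0-based, < l) and its position
   inside the block (0-based, < q): i = q * blk_hi i + blk_lo i. *)
Lemma blk_hi_proof (q l : nat) (i : 'I_(q * l)) : (i %/ q < l)%N.
Proof. case: q i => [|q] [i Hi] //=; by rewrite ltn_divLR // mulnC. Qed.

Lemma blk_lo_proof (q l : nat) (i : 'I_(q * l)) : (i %% q < q)%N.
Proof. case: q i => [|q] [i Hi] //=; by rewrite ltn_mod. Qed.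

Definition blk_hi (q l : nat) (i : 'I_(q * l)) : 'I_l := Ordinal (blk_hi_proof i).
Definition blk_lo (q l : nat) (i : 'I_(q * l)) : 'I_q := Ordinal (blk_lo_proof i).

Section Defs.
Variable R : fieldType.

(* O_l = [C; CA; ...; CA^(l-1)] *)
Definition obsv_mx (n p : nat) (A : 'M[R]_n) (C : 'M[R]_(p, n)) (l : nat)
  : 'M[R]_(p * l, n) :=
  \matrix_(i, j) (C *m A ^+ (blk_hi i)) (blk_lo i) j.

(* Reachability (controllability) matrix [B AB ... A^(k-1)B] *)
Definition ctrb_mx (n m : nat) (A : 'M[R]_n) (B : 'M[R]_(n, m)) (k : nat)
  : 'M[R]_(n, m * k) :=
  \matrix_(a, j) (A ^+ (blk_hi j) *m B) a (blk_lo j).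

Definition observable (n p : nat) (A : 'M[R]_n) (C : 'M[R]_(p, n)) : bool :=
  \rank (obsv_mx A C n) == n.

Definition reachable (n m : nat) (A : 'M[R]_n) (B : 'M[R]_(n, m)) : bool :=
  \rank (ctrb_mx A B n) == n.

Definition is_obs_index (n p : nat) (A : 'M[R]_n) (C : 'M[R]_(p, n)) (l : nat)
  : Prop :=
  \rank (obsv_mx A C l) = n /\ forall k, (k < l)%N -> \rank (obsv_mx A C k) != n.

(* T_l : block lower triangular, (i,j) block = C A^(i-j-1) B if i > j, else 0 *)
Definition toep_mx (n m p : nat) (A : 'M[R]_n) (B : 'M[R]_(n, m))
  (C : 'M[R]_(p, n)) (l : nat) : 'M[R]_(p * l, m * l) :=
  \matrix_(i, j)
    (if (blk_hi j < blk_hi i)%N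
     then (C *m A ^+ (blk_hi i - blk_hi j - 1) *m B) (blk_lo i) (blk_lo j)
     else 0).

(* R_l = [A^(l-1)B ... AB B] *)
Definition rev_ctrb_mx (n m : nat) (A : 'M[R]_n) (B : 'M[R]_(n, m)) (l : nat)
  : 'M[R]_(n, m * l) :=
  \matrix_(a, j) (A ^+ (l - 1 - blk_hi j) *m B) a (blk_lo j).

(* S_q : identity blocks I_q at block positions (i, i+1) *)
Definition shift_mx (q l : nat) : 'M[R]_(q * l) :=
  \matrix_(i, j) ((blk_hi j == (blk_hi i).+1 :> nat) && (blk_lo i == blk_lo j))%:R.

(* q*l x q matrix with I_q in its last q rows (last block) *)
Definition last_blk_mx (q l : nat) : 'M[R]_(q * l, q) :=
  \matrix_(i, j) ((blk_hi i == l.-1 :> nat) && (blk_lo i == j))%:R.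

Definition bF (p m l : nat) : 'M[R]_(p * l + m * l) :=
  block_mx (shift_mx p l) 0 0 (shift_mx m l).

Definition bL (p m l : nat) : 'M[R]_(p * l + m * l, p) :=
  col_mx (last_blk_mx p l) 0.

Definition bB (p m l : nat) : 'M[R]_(p * l + m * l, m) :=
  col_mx 0 (last_blk_mx m l).

Definition bZ (n m p : nat) (A : 'M[R]_n) (B : 'M[R]_(n, m)) (C : 'M[R]_(p, n))
  (l : nat) (OL : 'M[R]_(n, p * l)) : 'M[R]_(p, p * l + m * l) :=
  row_mx (C *m A ^+ l *m OL)
         (C *m rev_ctrb_mx A B l - C *m A ^+ l *m OL *m toep_mx A B C l).

Definition bA (n m p : nat) (A : 'M[R]_n) (B : 'M[R]_(n, m)) (C : 'M[R]_(p, n))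
  (l : nat) (OL : 'M[R]_(n, p * l)) : 'M[R]_(p * l + m * l) :=
  bF p m l + bL p m l *m bZ A B C OL.

End Defs.

From mathcomp Require Import all_boot all_order all_algebra zify.
Import GRing.Theory Num.Theory.
Set Implicit Arguments. Unset Strict Implicit. Unset Printing Implicit Defensive.
Local Open Scope ring_scope.

(* Let P = [O_l T_l; 0 I], and let (Â, B̂) = ([A  B E; 0  S_m], [0; L_m]) where E
   selects the first (oldest) input block: (Â, B̂) is the system with state
   (x(t-l), u(t-l), ..., u(t-1)), and P maps it to the state
   (y(t-l), ..., y(t-1), u(t-l), ..., u(t-1)) of (A_l, B_l).  The time-shift identities
   O_l A = S_p O_l + L_p C A^l  and  S_p T_l + L_p C R_l = O_l B E + T_l S_m
   give A_l P = P Â and B_l = P B̂.  As O^L O_l = I, P has a left inverse, so the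
   reachability matrices of (A_l, B_l) and (Â, B̂) have the same rank, at most n + ml.
   Thus reachability of (A_l, B_l) forces pl <= n, hence pl = n since n = rank O_l <= pl.
   Conversely, if (A, B) is reachable so is (Â, B̂): the first l powers of Â applied to
   B̂ fill the input buffer, the next ones drive x through the columns of A^j B. *)

Section BlockIndex.
Variables q l : nat.

Lemma blk_ord_proof (a : 'I_l) (b : 'I_q) : (q * a + b < q * l)%N.
Proof. by have := ltn_ord a; have := ltn_ord b; nia. Qed.

Definition blk_ord (a : 'I_l) (b : 'I_q) : 'I_(q * l) := Ordinal (blk_ord_proof a b).

Lemma blk_hi_ord a b : blk_hi (blk_ord a b) = a.
Proof.
have q_gt0 : (0 < q)%N by apply: leq_ltn_trans (ltn_ord b).
by apply: val_inj; rewrite /= mulnC divnMDl // divn_small // addn0.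
Qed.

Lemma blk_lo_ord a b : blk_lo (blk_ord a b) = b.
Proof. by apply: val_inj; rewrite /= mulnC modnMDl modn_small. Qed.

Lemma blk_idx_eq (i j : 'I_(q * l)) :
  (i == j) = (blk_hi i == blk_hi j :> nat) && (blk_lo i == blk_lo j :> nat).
Proof.
apply/eqP/andP => [-> // | [/eqP hi_eq /eqP lo_eq]].
by apply: val_inj => /=; rewrite (divn_eq i q) (divn_eq j q); congr (_ * _ + _)%N.
Qed.

End BlockIndex.

Section IndicatorSums.
Variables (R : pzSemiRingType) (I : finType) (P : pred I) (F : I -> R) (j : I).
Hypothesis P_pred1 : forall i, P i = (i == j).

Lemma sum_indicator_mull : \sum_i (P i)%:R * F i = F j.
Proof.
rewrite -(big_pred1 j P_pred1 : \sum_(i | P i) F i = F j) [RHS]big_mkcond.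
by apply: eq_bigr => i _; rewrite mulr_natl mulrb.
Qed.

Lemma sum_indicator_mulr : \sum_i F i * (P i)%:R = F j.
Proof.
rewrite -(big_pred1 j P_pred1 : \sum_(i | P i) F i = F j) [RHS]big_mkcond.
by apply: eq_bigr => i _; rewrite mulr_natr mulrb.
Qed.

End IndicatorSums.

Section BlockMatrices.
Variables (R : fieldType) (q l : nat).

Definition first_blk_mx : 'M[R]_(q, q * l) :=
  \matrix_(b, j) ((blk_hi j == 0%N :> nat) && (blk_lo j == b))%:R.

Local Notation S := (shift_mx R q l).
Local Notation L := (last_blk_mx R q l).

Lemma shift_mx_mulE k (X : 'M[R]_(q * l, k)) r c j :
  blk_hi j = (blk_hi r).+1 :> nat -> blk_lo j = blk_lo r -> (S *m X) r c = X j c.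
Proof.
move=> hi_j lo_j; rewrite mxE; under eq_bigr do rewrite mxE.
rewrite (sum_indicator_mull _ (j := j)) // => i.
by rewrite blk_idx_eq hi_j lo_j (eq_sym (blk_lo r)).
Qed.

Lemma shift_mx_mul0 k (X : 'M[R]_(q * l, k)) r c :
  (blk_hi r).+1 = l -> (S *m X) r c = 0.
Proof.
by move=> hi_r; rewrite mxE big1 // => j _; rewrite mxE hi_r ltn_eqF ?mul0r.
Qed.

Lemma mulmx_shift_mxE k (X : 'M[R]_(k, q * l)) r c j :
  (blk_hi j).+1 = blk_hi c :> nat -> blk_lo j = blk_lo c -> (X *m S) r c = X r j.
Proof.
move=> hi_j lo_j; rewrite mxE; under eq_bigr do rewrite [X in _ * X]mxE.
rewrite (sum_indicator_mulr _ (j := j)) // => i.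
by rewrite blk_idx_eq -hi_j lo_j eqSS eq_sym.
Qed.

Lemma mulmx_shift_mx0 k (X : 'M[R]_(k, q * l)) r c :
  blk_hi c = 0%N :> nat -> (X *m S) r c = 0.
Proof. by move=> hi_c; rewrite mxE big1 // => j _; rewrite mxE hi_c mulr0. Qed.

Lemma last_blk_mx_mulE k (Y : 'M[R]_(q, k)) r c :
  (L *m Y) r c = if blk_hi r == l.-1 :> nat then Y (blk_lo r) c else 0.
Proof.
rewrite mxE; under eq_bigr do rewrite mxE.
case: eqP => _; last by rewrite big1 // => b _; rewrite mul0r.
by rewrite (sum_indicator_mull _ (j := blk_lo r)).
Qed.

Lemma mulmx_last_blk_mxE k (X : 'M[R]_(k, q * l)) r c j :
  blk_hi j = l.-1 :> nat -> blk_lo j = c -> (X *m L) r c = X r j.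
Proof.
move=> hi_j lo_j; rewrite mxE; under eq_bigr do rewrite [X in _ * X]mxE.
by rewrite (sum_indicator_mulr _ (j := j)) // => i; rewrite blk_idx_eq hi_j lo_j.
Qed.

Lemma first_blk_mx_mulE k (X : 'M[R]_(q * l, k)) b c j :
  blk_hi j = 0%N :> nat -> blk_lo j = b -> (first_blk_mx *m X) b c = X j c.
Proof.
move=> hi_j lo_j; rewrite mxE; under eq_bigr do rewrite mxE.
by rewrite (sum_indicator_mull _ (j := j)) // => i; rewrite blk_idx_eq hi_j lo_j.
Qed.

Lemma mulmx_first_blk_mxE k (Y : 'M[R]_(k, q)) r c :
  (Y *m first_blk_mx) r c = if blk_hi c == 0%N :> nat then Y r (blk_lo c) else 0.
Proof.
rewrite mxE; under eq_bigr do rewrite [X in _ * X]mxE.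
case: eqP => _; last by rewrite big1 // => b _; rewrite mulr0.
by rewrite (sum_indicator_mulr _ (j := blk_lo c)) // => b; rewrite eq_sym.
Qed.

Lemma shift_exp_last_blkE i r c :
  (S ^+ i *m L) r c = ((blk_hi r + i == l.-1)%N && (blk_lo r == c))%:R.
Proof.
elim: i r => [|i IH] r; first by rewrite expr0 mul1mx mxE addn0.
rewrite exprS -mulmxE -mulmxA.
have [lt_r | ge_r] := ltnP (blk_hi r).+1 l.
  rewrite (shift_mx_mulE _ _ (j := blk_ord (Ordinal lt_r) (blk_lo r)))
    ?blk_hi_ord ?blk_lo_ord //.
  by rewrite IH blk_hi_ord blk_lo_ord addSnnS.
have last_r : (blk_hi r).+1 = l by apply/eqP; rewrite eqn_leq ge_r ltn_ord.
by rewrite shift_mx_mul0 // (_ : (_ == _)%N = false) //; apply/negbTE; lia.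
Qed.

Lemma shift_exp_last_blk_l : S ^+ l *m L = 0.
Proof.
apply/matrixP => r c; rewrite shift_exp_last_blkE mxE (_ : (_ == _)%N = false) //.
by apply/negbTE; have := ltn_ord (blk_hi r); lia.
Qed.

Lemma first_blk_shift_exp_last_blk i :
  (0 < l)%N -> first_blk_mx *m (S ^+ i *m L) = (i.+1 == l)%:R%:M.
Proof.
move=> l_gt0; apply/matrixP => b c.
rewrite (first_blk_mx_mulE _ _ (j := blk_ord (Ordinal l_gt0) b)) ?blk_hi_ord ?blk_lo_ord //.
rewrite shift_exp_last_blkE blk_hi_ord blk_lo_ord !mxE add0n.
have -> : (i == l.-1) = (i.+1 == l) by rewrite -(prednK l_gt0) eqSS.
by case: (b == c); rewrite ?andbT ?andbF ?mulr1n ?mulr0n.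
Qed.

End BlockMatrices.

Section ObsvCtrb.
Variable R : fieldType.

Lemma obsv_mx_mulE n p l k (A : 'M[R]_n) (C : 'M[R]_(p, n)) (X : 'M[R]_(n, k)) r c :
  (obsv_mx A C l *m X) r c = (C *m A ^+ blk_hi r *m X) (blk_lo r) c.
Proof. by rewrite !mxE; apply: eq_bigr => t _; rewrite mxE. Qed.

Lemma mulmx_ctrbE n m k a (A : 'M[R]_n) (B : 'M[R]_(n, m)) (X : 'M[R]_(a, n)) r j :
  (X *m ctrb_mx A B k) r j = (X *m (A ^+ blk_hi j *m B)) r (blk_lo j).
Proof. by rewrite !mxE; apply: eq_bigr => t _; rewrite mxE. Qed.

Lemma mulmx_ctrb_eq0 n m k (A : 'M[R]_n) (B : 'M[R]_(n, m)) (v : 'rV[R]_n) :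
  v *m ctrb_mx A B k = 0 <-> forall i, (i < k)%N -> v *m (A ^+ i *m B) = 0.
Proof.
split => [vK0 i lt_ik | vAB0].
  apply/rowP => c; move/matrixP/(_ 0 (blk_ord (Ordinal lt_ik) c)): vK0.
  by rewrite mulmx_ctrbE blk_hi_ord blk_lo_ord !mxE.
by apply/rowP => j; rewrite mulmx_ctrbE vAB0 // !mxE.
Qed.

Lemma exp_mulmx_intertwine a b (M : 'M[R]_a) (M' : 'M[R]_b) (P : 'M[R]_(a, b)) i :
  M *m P = P *m M' -> M ^+ i *m P = P *m M' ^+ i.
Proof.
move=> MP; elim: i => [|i IH]; first by rewrite !expr0 mul1mx mulmx1.
by rewrite !exprS -!mulmxE -mulmxA IH !mulmxA MP.
Qed.

Lemma ctrb_mx_intertwine a b m k (M : 'M[R]_a) (M' : 'M[R]_b) (P : 'M[R]_(a, b))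
    (B : 'M[R]_(b, m)) :
  M *m P = P *m M' -> ctrb_mx M (P *m B) k = P *m ctrb_mx M' B k.
Proof.
move=> MP; apply/matrixP => r j.
by rewrite mulmx_ctrbE mxE mulmxA (exp_mulmx_intertwine _ MP) -mulmxA.
Qed.

Lemma mxrank_mul_linv a b c (Q : 'M[R]_(b, a)) (P : 'M[R]_(a, b)) (X : 'M[R]_(b, c)) :
  Q *m P = 1%:M -> \rank (P *m X) = \rank X.
Proof.
move=> QP; apply/eqP; rewrite eqn_leq mxrankM_maxr /=.
by have := mxrankM_maxr Q (P *m X); rewrite mulmxA QP mul1mx.
Qed.

End ObsvCtrb.

Section ShiftIdentities.
Variables (R : fieldType) (n m p l : nat).
Variables (A : 'M[R]_n) (B : 'M[R]_(n, m)) (C : 'M[R]_(p, n)).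

Local Notation O := (obsv_mx A C l).
Local Notation T := (toep_mx A B C l).

Lemma obsv_mx_shift :
  shift_mx R p l *m O + last_blk_mx R p l *m (C *m A ^+ l) = O *m A.
Proof.
apply/matrixP => r c; rewrite obsv_mx_mulE -mulmxA mulmxE -exprSr [LHS]mxE.
rewrite last_blk_mx_mulE.
have [lt_r | ge_r] := ltnP (blk_hi r).+1 l.
  rewrite (shift_mx_mulE _ _ (j := blk_ord (Ordinal lt_r) (blk_lo r)))
    ?blk_hi_ord ?blk_lo_ord //.
  by rewrite mxE blk_hi_ord blk_lo_ord ifN ?addr0 //; lia.
have last_r : (blk_hi r).+1 = l by apply/eqP; rewrite eqn_leq ge_r ltn_ord.
by rewrite shift_mx_mul0 // add0r last_r ifT //; lia.
Qed.

Lemma toep_mx_shift :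
  shift_mx R p l *m T + last_blk_mx R p l *m (C *m rev_ctrb_mx A B l) =
  O *m (B *m first_blk_mx R m l) + T *m shift_mx R m l.
Proof.
apply/matrixP => r c; rewrite [LHS]mxE [RHS]mxE.
set F := fun e => (C *m A ^+ e *m B) (blk_lo r) (blk_lo c).
have ST : (shift_mx R p l *m T) r c =
    if ((blk_hi r).+1 < l)%N then
      if (blk_hi c < (blk_hi r).+1)%N then F ((blk_hi r).+1 - blk_hi c - 1)%N else 0
    else 0.
  case: ltnP => [lt_r | ge_r].
    rewrite (shift_mx_mulE _ _ (j := blk_ord (Ordinal lt_r) (blk_lo r)))
      ?blk_hi_ord ?blk_lo_ord //.
    by rewrite mxE blk_hi_ord blk_lo_ord.
  by rewrite shift_mx_mul0 //; apply/eqP; rewrite eqn_leq ge_r ltn_ord.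
have LCR : (last_blk_mx R p l *m (C *m rev_ctrb_mx A B l)) r c =
    if blk_hi r == l.-1 :> nat then F (l - 1 - blk_hi c)%N else 0.
  rewrite last_blk_mx_mulE; case: ifP => // _.
  by rewrite /F -mulmxA !mxE; apply: eq_bigr => t _; rewrite mxE.
have OBE : (O *m (B *m first_blk_mx R m l)) r c =
    if blk_hi c == 0%N :> nat then F (blk_hi r) else 0.
  by rewrite obsv_mx_mulE mulmxA mulmx_first_blk_mxE.
have TS : (T *m shift_mx R m l) r c =
    if (0 < blk_hi c)%N then
      if ((blk_hi c).-1 < blk_hi r)%N then F (blk_hi r - (blk_hi c).-1 - 1)%N else 0
    else 0.
  case: posnP => [hi_c0 | hi_c_gt0]; first by rewrite mulmx_shift_mx0.
  have lt_c : ((blk_hi c).-1 < l)%N by rewrite (leq_ltn_trans (leq_pred _)).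
  rewrite (mulmx_shift_mxE _ _ (j := blk_ord (Ordinal lt_c) (blk_lo c)))
    ?blk_hi_ord ?blk_lo_ord ?prednK //.
  by rewrite mxE ?blk_hi_ord ?blk_lo_ord -[in RHS](prednK hi_c_gt0).
(* With x, y the row and column block indices, both sides are F (x - y) if y <= x, else 0. *)
rewrite ST LCR OBE TS; move: (ltn_ord (blk_hi r)) (ltn_ord (blk_hi c)).
move: (nat_of_ord (blk_hi r)) (nat_of_ord (blk_hi c)) => x y x_lt y_lt.
by repeat case: ifP => ?; rewrite ?addr0 ?add0r //; try (exfalso; lia); congr F; lia.
Qed.

Lemma toep_mx_last_blk : T *m last_blk_mx R m l = 0.
Proof.
apply/matrixP => r c; have lt_l : (l.-1 < l)%N by have := ltn_ord (blk_hi r); lia.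
rewrite (mulmx_last_blk_mxE _ _ (j := blk_ord (Ordinal lt_l) c)) ?blk_hi_ord ?blk_lo_ord //.
by rewrite !mxE ?blk_hi_ord ifN //; move: (ltn_ord (blk_hi r)) => /=; lia.
Qed.

End ShiftIdentities.

Section Augmented.
Variables (R : fieldType) (n m p l : nat).
Variables (A : 'M[R]_n) (B : 'M[R]_(n, m)) (C : 'M[R]_(p, n)).

Local Notation S := (shift_mx R m l).
Local Notation L := (last_blk_mx R m l).

Definition augA : 'M[R]_(n + m * l) := block_mx A (B *m first_blk_mx R m l) 0 S.

Definition augB : 'M[R]_(n + m * l, m) := col_mx 0 L.

Definition io_mx : 'M[R]_(p * l + m * l, n + m * l) :=
  block_mx (obsv_mx A C l) (toep_mx A B C l) 0 1%:M.

Lemma io_mx_linv (OL : 'M[R]_(n, p * l)) : OL *m obsv_mx A C l = 1%:M ->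
  block_mx OL (- (OL *m toep_mx A B C l)) 0 1%:M *m io_mx = 1%:M.
Proof.
move=> OL_linv; rewrite /io_mx mulmx_block !mulmx0 !mul0mx !mulmx1 !addr0 add0r.
by rewrite OL_linv addrN -scalar_mx_block.
Qed.

Lemma bB_io_mx : bB R p m l = io_mx *m augB.
Proof.
by rewrite /bB /io_mx /augB mul_block_col !mulmx0 toep_mx_last_blk mul1mx !addr0 add0r.
Qed.

Lemma bA_io_mx (OL : 'M[R]_(n, p * l)) : OL *m obsv_mx A C l = 1%:M ->
  bA A B C OL *m io_mx = io_mx *m augA.
Proof.
move=> OL_linv; rewrite /bA /bF /bL /bZ /io_mx /augA mul_col_row add_block_mx !mulmx_block.
rewrite !mul0mx !mulmx0 !addr0 !add0r !mulmx1 !mul1mx; congr block_mx.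
- by rewrite mulmxDl -!mulmxA OL_linv mulmx1 obsv_mx_shift.
- by rewrite mulmxDl mulmxBr -!mulmxA addrACA addrN addr0 toep_mx_shift.
- by rewrite mul0mx.
- by rewrite mul0mx add0r.
Qed.

Lemma augA_exp_augB_buffer i : (i < l)%N ->
  augA ^+ i *m augB = col_mx 0 (S ^+ i *m L).
Proof.
elim: i => [|i IH] lt_il; first by rewrite !expr0 !mul1mx.
rewrite exprS -mulmxE -mulmxA IH 1?ltnW // mul_block_col !mulmx0 !add0r.
rewrite -mulmxA first_blk_shift_exp_last_blk ?ltn_eqF 1?(leq_trans _ lt_il) //.
by rewrite mul_mx_scalar scale0r mulmxA mulmxE -exprS.
Qed.

Lemma augA_exp_augB_state j : (0 < l)%N ->
  augA ^+ (l + j) *m augB = col_mx (A ^+ j *m B) 0.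
Proof.
move=> l_gt0; elim: j => [|j IH].
  have -> : augA ^+ (l + 0) = augA * augA ^+ l.-1 by rewrite addn0 -exprS prednK.
  rewrite -mulmxE -mulmxA.
  rewrite augA_exp_augB_buffer ?prednK // mul_block_col !mulmx0 !add0r.
  rewrite -mulmxA first_blk_shift_exp_last_blk ?prednK // eqxx mulmx1 mulmxA mulmxE -exprS.
  by rewrite prednK // shift_exp_last_blk_l expr0 mul1mx.
rewrite addnS exprS -mulmxE -mulmxA IH mul_block_col !mulmx0 mul0mx !addr0.
by rewrite mulmxA mulmxE -exprS.
Qed.

Lemma aug_reachable k : reachable A B -> (0 < l)%N -> (n + l <= k)%N ->
  row_free (ctrb_mx augA augB k).
Proof.
move=> reachAB l_gt0 le_k; apply: inj_row_free => w /mulmx_ctrb_eq0 w_ann.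
have state0 : lsubmx w = 0.
  apply: (row_free_inj (reachAB : row_free _)); rewrite mul0mx.
  apply/mulmx_ctrb_eq0 => i lt_in; have := w_ann (l + i)%N (leq_trans _ le_k).
  rewrite -[w]hsubmxK augA_exp_augB_state // mul_row_col mulmx0 addr0 row_mxKl.
  by apply; rewrite addnC ltn_add2r.
have buffer0 : rsubmx w = 0.
  apply/rowP => r; have lt_rl := ltn_ord (blk_hi r).
  have lt_ik : (l.-1 - blk_hi r < k)%N by lia.
  move: (w_ann _ lt_ik); rewrite -[w]hsubmxK augA_exp_augB_buffer; last by lia.
  rewrite mul_row_col mulmx0 add0r row_mxKr => /matrixP/(_ 0 (blk_lo r)).
  rewrite mxE; under eq_bigr do rewrite shift_exp_last_blkE.
  rewrite (sum_indicator_mulr _ (j := r)) => [-> | t]; first by rewrite !mxE.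
  by rewrite blk_idx_eq; congr (_ && _); apply/eqP/eqP; move: (ltn_ord (blk_hi t)); lia.
by rewrite -[w]hsubmxK state0 buffer0 row_mx0.
Qed.

End Augmented.

Theorem lemma2 (R : realFieldType) (n m p : nat)
  (A : 'M[R]_n) (B : 'M[R]_(n, m)) (C : 'M[R]_(p, n)) (l : nat)
  (OL : 'M[R]_(n, p * l)) :
  observable A C -> reachable A B -> is_obs_index A C l ->
  OL *m obsv_mx A C l = 1%:M ->
  reachable (bA A B C OL) (bB R p m l) <-> (p * l = n)%N.
Proof.
move=> _ reachAB [rank_obsv _] OL_linv.
set K := ctrb_mx (augA l A B) (augB R n m l) (p * l + m * l).
rewrite /reachable (bB_io_mx l A B C) (ctrb_mx_intertwine _ _ (bA_io_mx B OL_linv)).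
rewrite (mxrank_mul_linv _ (io_mx_linv B OL_linv)) -/K.
have n_le_pl : (n <= p * l)%N by rewrite -rank_obsv rank_leq_row.
have n_le_mn : (n <= m * n)%N by rewrite -{1}(eqP reachAB) rank_leq_col.
have rank_K_le := rank_leq_row K.
split=> [/eqP | pl_n]; first by lia.
(* If m l = 0 then n = 0, as n <= m n and n <= p l. *)
have [ml0 | ml_gt0] := posnP (m * l); first by apply/eqP; nia.
have /andP [m_gt0 l_gt0] : (0 < m)%N && (0 < l)%N by rewrite -muln_gt0.
have /eqP -> : row_free K by apply: aug_reachable; rewrite // pl_n leq_add2l leq_pmull.
by apply/eqP; lia.
Qed.
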